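(* Let $\mathcal T$ be an orbital category. The monotone map $\upsilon:\mathrm{wIndSys}_{\mathcal T}\to\mathrm{Fam}_{\mathcal T}$ has a fully faithful left adjoint given by $\mathcal F\mapsto E^{\mathcal T}_{\mathcal F}\underline{\mathbb F}^0_{\mathcal F}$, the $\mathcal T$-weak indexing system whose $V$-value is $\{\emptyset_V,*_V\}$ (up to isomorphism) for $V\in\mathcal F$ and $\emptyset$ otherwise.
   Context: For a small category $\mathcal T$, $\mathbb F_{\mathcal T}$ is the full subcategory of $\mathrm{Fun}(\mathcal T^{op},\mathrm{Set})$ on finite coproducts of representables; $\mathcal T$ is orbital if $\mathbb F_{\mathcal T}$ has pullbacks. $\mathbb F_V:=\mathbb F_{\mathcal T,/V}$, $*_V$ terminal, $\emptyset_V$ initial; for $U\to V$, $\mathrm{Res}^V_U$ is pullback and $\mathrm{Ind}^V_U$ postcomposition. A full $\mathcal T$-subcategory assigns isomorphism-closed classes $\mathcal C_V\subseteq\mathrm{Ob}\,\mathbb F_V$ stable under restriction. For $S\in\mathbb F_V$ with orbits $U$ and $T_U\in\mathbb F_U$, $\coprod_U^ST_U:=\coprod_U\mathrm{Ind}_U^VT_U$. A $\mathcal T$-weak indexing system is a full $\mathcal T$-subcategory with $\mathcal C_V\neq\emptyset\Rightarrow *_V\in\mathcal C_V$ and closed under $\coprod^S_UT_U$ for $S\in\mathcal C_V$, $T_U\in\mathcal C_U$; $\mathrm{wIndSys}_{\mathcal T}$ is their poset under inclusion. A $\mathcal T$-family is a full subcategory $\mathcal F$ with $V\to W$, $W\in\mathcal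 F\Rightarrow V\in\mathcal F$; $\mathrm{Fam}_{\mathcal T}$ their poset. $\upsilon(\mathcal C)=\{V\mid\emptyset_V\in\mathcal C_V\}$. A monotone map $L$ is left adjoint to $\pi$ if $L(x)\le y\iff x\le\pi(y)$; fully faithful means order-reflecting. *)

From mathcomp Require Import all_boot.
Set Implicit Arguments. Unset Strict Implicit. Unset Printing Implicit Defensive.

Record smallcat := SmallCat {
  Ob : Type;
  Hm : Ob -> Ob -> Type;
  idm : forall a, Hm a a;
  cmp : forall a b d, Hm b d -> Hm a b -> Hm a d;
  cmp_idl : forall a b (f : Hm a b), cmp (idm b) f = f;
  cmp_idr : forall a b (f : Hm a b), cmp f (idm a) = f;
  cmp_assoc : forall a b c d (h : Hm c d) (g : Hm b c) (f : Hm a b),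
      cmp h (cmp g f) = cmp (cmp h g) f
}.
Arguments idm {s} a.
Arguments Hm {s}.
Arguments cmp {s a b d} _ _.

Section FT.
Variable T : smallcat.

(* F_T: finite coproducts of representables, presented as the free finite
   coproduct completion: an object is a finite family of objects of T; since
   Hom(y V, coprod_j y W_j) = coprod_j Hom(V, W_j), a morphism sends each
   summand i to a summand j together with a T-morphism. *)
Record fobj := FObj { fidx : finType; ffam : fidx -> Ob T }.
Arguments ffam : clear implicits.

Definition fhom (A B : fobj) :=
  forall i : fidx A, {j : fidx B & Hm (ffam A i) (ffam B j)}.

Definition fid (A : fobj) : fhom A A := fun i => existT _ i (idm _).
Arguments fid : clear implicits.

Definition fcomp (A B C : fobj) (g : fhom B C) (f : fhom A B) : fhom A C :=
  fun i => let: existT j a := f i in let: existT k b := g j in existT _ k (cmp b a).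

Definition feq (A B : fobj) (f g : fhom A B) := forall i, f i = g i.

Definition is_pullback (A B C P : fobj) (f : fhom A C) (g : fhom B C)
    (pa : fhom P A) (pb : fhom P B) : Prop :=
  feq (fcomp f pa) (fcomp g pb) /\
  forall (Q : fobj) (qa : fhom Q A) (qb : fhom Q B),
    feq (fcomp f qa) (fcomp g qb) ->
    exists u : fhom Q P,
      [/\ feq (fcomp pa u) qa, feq (fcomp pb u) qb &
          forall u' : fhom Q P, feq (fcomp pa u') qa -> feq (fcomp pb u') qb -> feq u' u].

Definition orbital : Prop :=
  forall (A B C : fobj) (f : fhom A C) (g : fhom B C),
    exists (P : fobj) (pa : fhom P A) (pb : fhom P B), is_pullback f g pa pb.

Definition rep (V : Ob T) : fobj := FObj (fun _ : unit => V).
Definition rep_hom (U V : Ob T) (g : Hm U V) : fhom (rep U) (rep V) :=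
  fun _ => existT _ tt g.

(* F_V = F_T / V *)
Record sobj (V : Ob T) := SObj { sdom : fobj; sstr : fhom sdom (rep V) }.
Arguments sstr {V} s i.

Definition siso (V : Ob T) (S S' : sobj V) : Prop :=
  exists (u : fhom (sdom S) (sdom S')) (v : fhom (sdom S') (sdom S)),
    [/\ feq (fcomp (sstr S') u) (sstr S), feq (fcomp (sstr S) v) (sstr S'),
        feq (fcomp v u) (fid _) & feq (fcomp u v) (fid _)].

Definition sterm (V : Ob T) : sobj V := SObj (fid (rep V)).
Definition fempty : fobj := FObj (fun i : void => match i with end).
Definition sinit (V : Ob T) : sobj V :=
  @SObj V fempty (fun i : void => match i with end).

(* R is (a choice of) Res^V_U S along g : U -> V, i.e. a pullback *)
Definition is_res (U V : Ob T) (g : Hm U V) (S : sobj V) (R : sobj U) : Prop :=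
  exists q : fhom (sdom R) (sdom S), is_pullback (sstr S) (rep_hom g) q (sstr R).

(* orbits of S in F_V: the summands U_i, with T_U_i in F_{U_i};
   coprod^S_U T_U := coprod_i Ind^V_{U_i} T_{U_i} *)
Definition orbit (V : Ob T) (S : sobj V) (i : fidx (sdom S)) : Ob T := ffam (sdom S) i.
Arguments orbit {V} S i.

Definition scoprod (V : Ob T) (S : sobj V) (Tf : forall i, sobj (orbit S i)) : sobj V :=
  @SObj V (FObj (fun x : {i : fidx (sdom S) & fidx (sdom (Tf i))} =>
                  ffam (sdom (Tf (tag x))) (tagged x)))
    (fun x => existT _ tt (cmp (projT2 (sstr S (tag x)))
                                (projT2 (sstr (Tf (tag x)) (tagged x))))).

Definition tsub := forall V : Ob T, sobj V -> Prop.

Definition full_tsub (C : tsub) : Prop :=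
  (forall V (S S' : sobj V), siso S S' -> C V S -> C V S') /\
  (forall U V (g : Hm U V) (S : sobj V) (R : sobj U), C V S -> is_res g S R -> C U R).

Definition weak_indexing_system (C : tsub) : Prop :=
  [/\ full_tsub C,
      (forall V, (exists S, C V S) -> C V (sterm V)) &
      (forall V (S : sobj V) (Tf : forall i, sobj (orbit S i)),
          C V S -> (forall i, C _ (Tf i)) -> C V (scoprod Tf))].

Definition tsub_le (C C' : tsub) : Prop := forall V S, C V S -> C' V S.

Definition Tfamily (F : Ob T -> Prop) : Prop :=
  forall V W (g : Hm V W), F W -> F V.

Definition fam_le (F F' : Ob T -> Prop) : Prop := forall V, F V -> F' V.

Definition upsilon (C : tsub) : Ob T -> Prop := fun V => C V (sinit V).

Definition EF0 (F : Ob T -> Prop) : tsub :=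
  fun V S => F V /\ (siso (sinit V) S \/ siso (sterm V) S).

End FT.

From Pilot Require Import Defs.
From mathcomp Require Import all_boot.
From Stdlib Require Import Setoid Morphisms Eqdep_dec.
Set Implicit Arguments. Unset Strict Implicit. Unset Printing Implicit Defensive.

(** An object of F_V isomorphic to the initial object is one with no
    orbits, and one isomorphic to the terminal object is one with a single
    orbit mapping isomorphically onto V.  Both shapes are stable under
    restriction (pullbacks of isomorphisms are isomorphisms) and under
    composite coproducts, so E_F F^0_F is a weak indexing system.  It is the
    least weak indexing system containing the initial objects over F, because
    any such system also contains the terminal objects there; and since
    upsilon(E_F F^0_F) = F, the left adjoint is fully faithful. *)

#[local] Arguments fid {T A} i.
#[local] Arguments sstr {T V} s i.

Lemma existT_inj {I : eqType} {P : I -> Type} {i : I} {x y : P i} :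
  existT P i x = existT P i y -> x = y.
Proof. apply: inj_pair2_eq_dec; exact: eq_comparable. Qed.

Section FiniteCoproductCompletion.
Variable T : smallcat.
Implicit Types A B C P : fobj T.

#[local] Instance feq_equiv A B : Equivalence (@feq T A B).
Proof. by split=> [f i | f g fg i | f g h fg gh i]; rewrite ?fg ?gh. Qed.

#[local] Instance fcomp_proper A B C :
  Proper (@feq T B C ==> @feq T A B ==> @feq T A C) (@fcomp T A B C).
Proof.
move=> g g' gg' f f' ff' i; rewrite /fcomp ff'.
by case: (f' i) => j a; rewrite gg'.
Qed.

Lemma fcompA A B C P (h : fhom C P) (g : fhom B C) (f : fhom A B) :
  feq (fcomp h (fcomp g f)) (fcomp (fcomp h g) f).
Proof.
move=> i; rewrite /fcomp.
by case: (f i) => j a; case: (g j) => k b; case: (h k) => l c; rewrite cmp_assoc.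
Qed.

Lemma fcomp1f A B (f : fhom A B) : feq (fcomp fid f) f.
Proof. by move=> i; rewrite /fcomp /fid; case: (f i) => j a; rewrite cmp_idl. Qed.

Lemma fcompf1 A B (f : fhom A B) : feq (fcomp f fid) f.
Proof. by move=> i; rewrite /fcomp /fid; case: (f i) => j a; rewrite cmp_idr. Qed.

Definition fiso A B (f : fhom A B) :=
  exists u : fhom B A, feq (fcomp f u) fid /\ feq (fcomp u f) fid.

Lemma pullback_fiso A B C P (f : fhom A C) (g : fhom B C) (pa : fhom P A) (pb : fhom P B) :
  is_pullback f g pa pb -> fiso f -> fiso pb.
Proof.
move=> [square univ] [w [fw wf]].
have square' : feq (fcomp f (fcomp w g)) (fcomp g fid).
  by rewrite fcompA fw fcomp1f fcompf1.
have [u [pau pbu _]] := univ _ _ _ square'.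
exists u; split=> //.
have [u0 [_ _ unique]] := univ _ _ _ square.
transitivity u0; last by symmetry; apply: unique; exact: fcompf1.
apply: unique; last by rewrite fcompA pbu fcomp1f.
by rewrite fcompA pau -fcompA -square fcompA wf fcomp1f.
Qed.

Definition tiso (a b : Ob T) (f : Hm a b) := exists h, cmp f h = idm b /\ cmp h f = idm a.

Lemma tiso_cmp (a b c : Ob T) (g : Hm b c) (f : Hm a b) :
  tiso g -> tiso f -> tiso (cmp g f).
Proof.
move=> [g' [gg' g'g]] [f' [ff' f'f]]; exists (cmp f' g'); split.
- by rewrite -cmp_assoc (cmp_assoc f) ff' cmp_idl gg'.
- by rewrite -cmp_assoc (cmp_assoc g') g'g cmp_idl f'f.
Qed.

Lemma fiso_repP A (V : Ob T) (f : fhom A (rep V)) :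
  fiso f <-> exists i0, (forall i, i = i0) /\ tiso (projT2 (f i0)).
Proof.
split.
- move=> [u [fu uf]]; case Eu: (u tt) => [i0 h].
  have single i : i = i0.
    move: (uf i); rewrite /fcomp /fid; case: (f i) => [[] s].
    by rewrite Eu => /(congr1 (@projT1 _ _)).
  exists i0; split=> //; exists h.
  move: (fu tt) (uf i0); rewrite /fcomp /fid Eu; case: (f i0) => [[] s] /=.
  by rewrite Eu => /existT_inj sh /existT_inj hs.
- move=> [i0 [single [h [sh hs]]]]; exists (fun _ => existT _ i0 h); split.
  + by case; rewrite /fcomp /fid; case: (f i0) sh => [[] s] /= ->.
  + move=> i; rewrite /fcomp /fid (single i).
    by case: (f i0) hs => [[] s] /= ->.
Qed.

Lemma siso_refl (V : Ob T) (S : sobj V) : siso S S.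
Proof. by exists fid, fid; split; rewrite ?fcompf1. Qed.

Lemma siso_trans (V : Ob T) (S1 S2 S3 : sobj V) : siso S1 S2 -> siso S2 S3 -> siso S1 S3.
Proof.
move=> [u1 [v1 [a1 b1 c1 d1]]] [u2 [v2 [a2 b2 c2 d2]]].
exists (fcomp u2 u1), (fcomp v1 v2); split.
- by rewrite fcompA a2 a1.
- by rewrite fcompA b1 b2.
- by rewrite fcompA -(fcompA v1) c2 fcompf1 c1.
- by rewrite fcompA -(fcompA u2) d1 fcompf1 d2.
Qed.

Lemma siso_sinitP (V : Ob T) (S : sobj V) : siso (sinit V) S <-> (fidx (sdom S) -> False).
Proof.
split; first by move=> [u [v _]] i; case: (projT1 (v i)).
move=> empty.
exists (fun i : void => match i with end), (fun i => match empty i with end).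
by split=> i; [case: i | case: (empty i) | case: i | case: (empty i)].
Qed.

Lemma siso_stermP (V : Ob T) (S : sobj V) : siso (sterm V) S <-> fiso (sstr S).
Proof.
split.
- move=> [u [v [a b c d]]]; exists u; split=> //.
  have vE : feq v (sstr S) by rewrite -b /sterm /= fcomp1f.
  by rewrite -vE.
- move=> [u [a b]]; exists u, (sstr S); split=> //; exact: fcomp1f.
Qed.

Lemma is_res_sinit (U V : Ob T) (g : Hm U V) : is_res g (sinit V) (sinit U).
Proof.
exists (fun i : void => match i with end); split; first by case.
move=> Q qa qb _; exists (fun i => match projT1 (qa i) with end).
by split=> [i | i | u' _ _ i]; case: (projT1 (qa i)).
Qed.

Lemma res_siso_sinit (U V : Ob T) (g : Hm U V) (S : sobj V) (R : sobj U) :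
  is_res g S R -> siso (sinit V) S -> siso (sinit U) R.
Proof.
move=> [q _] /siso_sinitP emptyS; apply/siso_sinitP => i.
exact: emptyS (projT1 (q i)).
Qed.

Lemma res_siso_sterm (U V : Ob T) (g : Hm U V) (S : sobj V) (R : sobj U) :
  is_res g S R -> siso (sterm V) S -> siso (sterm U) R.
Proof. by move=> [q pb] /siso_stermP isoS; apply/siso_stermP; exact: pullback_fiso pb isoS. Qed.

Section CompositeCoproduct.
Variables (V : Ob T) (S : sobj V) (Tf : forall i, sobj (Defs.orbit (S:=S) i)).

Lemma scoprod_siso_sinit : (forall i, siso (sinit _) (Tf i)) -> siso (sinit V) (scoprod Tf).
Proof. by move=> emptyT; apply/siso_sinitP => -[i j]; exact: (siso_sinitP _).1 (emptyT i) j. Qed.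

Lemma scoprod_siso_sterm :
  siso (sterm V) S -> (forall i, siso (sterm _) (Tf i)) -> siso (sterm V) (scoprod Tf).
Proof.
move=> /siso_stermP /fiso_repP [i0 [single_i iso_s]] termT.
have /siso_stermP /fiso_repP [j0 [single_j iso_t]] := termT i0.
apply/siso_stermP/fiso_repP; exists (existT _ i0 j0); split.
- by case=> i j; move: j; rewrite (single_i i) => j; rewrite (single_j j).
- exact: tiso_cmp.
Qed.

End CompositeCoproduct.

Lemma siso_sterm_single (V : Ob T) (S : sobj V) :
  siso (sterm V) S -> exists i0 : fidx (sdom S), forall i, i = i0.
Proof. by move=> /siso_stermP /fiso_repP [i0 [single _]]; exists i0. Qed.

End FiniteCoproductCompletion.

Section FamilyToIndexingSystem.
Variables (T : smallcat) (F : Ob T -> Prop).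
Hypothesis famF : Tfamily F.

Lemma EF0_full_tsub : full_tsub (EF0 F).
Proof.
split.
- move=> V S S' iso [FV [init | term]]; split=> //.
  + by left; exact: siso_trans iso.
  + by right; exact: siso_trans iso.
- move=> U V g S R [FV initS_or_termS] res; split; first exact: famF FV.
  case: initS_or_termS => [init | term].
  + by left; exact: res_siso_sinit res init.
  + by right; exact: res_siso_sterm res term.
Qed.

Lemma EF0_scoprod (V : Ob T) (S : sobj V) (Tf : forall i, sobj (Defs.orbit (S:=S) i)) :
  EF0 F S -> (forall i, EF0 F (Tf i)) -> EF0 F (scoprod Tf).
Proof.
move=> [FV [initS | termS]] ET; split=> //.
  by left; apply: scoprod_siso_sinit => i; case: ((siso_sinitP _).1 initS i).
have [i0 single] := siso_sterm_single termS.
have [_ [initT | termT]] := ET i0.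
- by left; apply: scoprod_siso_sinit => i; rewrite (single i).
- by right; apply: scoprod_siso_sterm termS _ => i; rewrite (single i).
Qed.

Lemma EF0_weak_indexing_system : weak_indexing_system (EF0 F).
Proof.
split; [exact: EF0_full_tsub | | exact: EF0_scoprod].
by move=> V [S [FV _]]; split=> //; right; exact: siso_refl.
Qed.

Lemma upsilon_EF0 (V : Ob T) : upsilon (EF0 F) V <-> F V.
Proof. by split=> [[] | FV] //; split=> //; left; exact: siso_refl. Qed.

End FamilyToIndexingSystem.

Lemma upsilon_Tfamily (T : smallcat) (C : tsub T) : full_tsub C -> Tfamily (upsilon C).
Proof. by move=> [_ resC] V W g CW; exact: resC CW (is_res_sinit g). Qed.

Lemma EF0_le_adjoint (T : smallcat) (F : Ob T -> Prop) (C : tsub T) :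
  weak_indexing_system C -> tsub_le (EF0 F) C <-> fam_le F (upsilon C).
Proof.
move=> [[isoC _] termC _]; split.
  by move=> le V FV; apply: le; split=> //; left; exact: siso_refl.
move=> le V S [FV [initS | termS]].
- exact: isoC initS (le V FV).
- by apply: isoC termS _; apply: termC; exists (sinit V); exact: le.
Qed.

Theorem mainTheorem13 (T : smallcat) (horb : orbital T) :
  (* upsilon is a well-defined monotone map wIndSys_T -> Fam_T *)
  (forall C : tsub T, weak_indexing_system C -> Tfamily (upsilon C)) /\
  (forall C C' : tsub T, weak_indexing_system C -> weak_indexing_system C' ->
      tsub_le C C' -> fam_le (upsilon C) (upsilon C')) /\
  (* F |-> E_F F^0_F is a well-defined monotone map Fam_T -> wIndSys_T *)
  (forall F : Ob T -> Prop, Tfamily F -> weak_indexing_system (EF0 F)) /\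
  (forall F F' : Ob T -> Prop, Tfamily F -> Tfamily F' ->
      fam_le F F' -> tsub_le (EF0 F) (EF0 F')) /\
  (* it is left adjoint to upsilon *)
  (forall (F : Ob T -> Prop) (C : tsub T), Tfamily F -> weak_indexing_system C ->
      (tsub_le (EF0 F) C <-> fam_le F (upsilon C))) /\
  (* and fully faithful (order-reflecting) *)
  (forall F F' : Ob T -> Prop, Tfamily F -> Tfamily F' ->
      tsub_le (EF0 F) (EF0 F') -> fam_le F F').
Proof.
split; first by move=> C [fullC _ _]; exact: upsilon_Tfamily.
split; first by move=> C C' _ _ le V; exact: le.
split; first exact: EF0_weak_indexing_system.
split; first by move=> F F' _ _ le V S [FV isoS]; split=> //; exact: le.
split; first by move=> F C _; exact: EF0_le_adjoint.
move=> F F' _ famF' le V FV; apply/(upsilon_EF0 F').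
by move: V FV; apply/EF0_le_adjoint=> //; exact: EF0_weak_indexing_system.
Qed.
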